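(* Let $\mathcal G$ be a shortest-path game in which $\mathrm{Val}^{\mathrm d}(v)\neq+\infty$ and $\overline{\mathrm{Val}}^{\mathrm m}(v)\neq+\infty$ for all vertices $v$, and let $\rho$ be a memoryless strategy of Min such that $\mathbb P^{\rho,\tau}_v(\Diamond T)=1$ for every vertex $v$ and every memoryless strategy $\tau$ of Max. Let $\widetilde{\mathcal G}$ and $\sigma_1$ be as defined below. Then $\sigma_1$ is an NC-strategy: every cycle of $\widetilde{\mathcal G}$ conforming to $\sigma_1$ has negative total weight.
   Context: A shortest-path game is $\mathcal G=(V_{\mathrm{Max}},V_{\mathrm{Min}},T,E,w)$ with finite $V=V_{\mathrm{Max}}\uplus V_{\mathrm{Min}}\uplus T$, edges $E\subseteq (V\setminus T)\times V$ with every non-target vertex having a successor, and integer weights $w\colon E\to\mathbb Z$. Plays from $v$ are finite paths ending at their first visit to $T$ (total payoff $\mathrm{TP}$ = sum of weights) or infinite paths avoiding $T$ ($\mathrm{TP}=+\infty$). Strategies of Min (resp. Max) map finite paths ending in $V_{\mathrm{Min}}$ (resp. $V_{\mathrm{Max}}$) to distributions on successors of the last vertex; deterministic = always Dirac, memoryless = depends only on the last vertex. $\mathrm{Val}^{\mathrm d}(v)=\inf_\sigma\sup_\tau\mathrm{TP}(\text{unique play from } v \text{ conforming to }\sigma,\tau)$ over deterministic strategies. For memoryless $\rho,\tau$, $\mathbb P^{\rho,\tau}_v,\mathbb E^{\rho,\tau}_v$ refer to the induced Markov chain; $\mathrm{Val}^{\mathrm m,\rho}(v)=\sup_\tau\mathbb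 E^{\rho,\tau}_v(\mathrm{TP})$ over memoryless $\tau$, $\overline{\mathrm{Val}}^{\mathrm m}(v)=\inf_\rho\mathrm{Val}^{\mathrm m,\rho}(v)$. For $v\in V_{\mathrm{Min}}$ let $\widetilde E(v)=\arg\min_{v'\in\mathrm{supp}(\rho(v))}\big[w(v,v')+\mathrm{Val}^{\mathrm m,\rho}(v')\big]$, and let $\widetilde{\mathcal G}$ be obtained from $\mathcal G$ by removing every edge $(v,v')$ with $v\in V_{\mathrm{Min}}$, $v'\notin\widetilde E(v)$. Let $d(v)$ be the attractor distance to $T$ in the graph where Min vertices $v$ only use edges to $\mathrm{supp}(\rho(v))$: $d(v)=0$ for $v\in T$, and $d$ is the least function with $d(v)=1+\min_{v'\in\mathrm{supp}(\rho(v))}d(v')$ for $v\in V_{\mathrm{Min}}$ and $d(v)=1+\max_{v'\in E(v)}d(v')$ for $v\in V_{\mathrm{Max}}$. Let $\sigma_1$ be the memoryless deterministic Min strategy with $\sigma_1(v)\in\arg\min_{v'\in\widetilde E(v)}d(v')$. A cycle conforms to $\sigma_1$ if every Min vertex $u$ on it is followed by $\sigma_1(u)$. *)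

From HB Require Import structures.
From mathcomp Require Import all_boot all_order all_algebra.
From mathcomp Require Import boolp classical_sets reals constructive_ereal ereal esum.
Set Implicit Arguments. Unset Strict Implicit. Unset Printing Implicit Defensive.
Import Order.TTheory GRing.Theory Num.Theory.
Local Open Scope classical_set_scope.
Local Open Scope ring_scope.

(* A shortest-path game on a finite vertex type V.  The partition
   V = V_Max ⊎ V_Min ⊎ T is encoded by the two predicates [isT] and [isMin]
   (disjoint), V_Max being the remaining vertices. *)
Record game (V : finType) := Game {
  isT : pred V;
  isMin : pred V;
  edge : rel V;
  weight : V -> V -> int;
  T_notMin : forall v, isT v -> ~~ isMin v;
  edge_src : forall u v, edge u v -> ~~ isT u;
  succ_ex : forall u, ~~ isT u -> exists v, edge u v
}.

Definition isMax (V : finType) (G : game V) (v : V) : bool :=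
  ~~ isT G v && ~~ isMin G v.

(* A deterministic strategy maps a finite path, given as its first vertex
   v0 and the rest s (so its last vertex is [last v0 s]), to a successor. *)
Definition dstrat (V : finType) (G : game V) (own : pred V)
  (sg : V -> seq V -> V) : Prop :=
  forall v0 s, own (last v0 s) -> edge G (last v0 s) (sg v0 s).

(* the vertices v1 ... vn visited after v0 in the first n steps *)
Fixpoint dhist (V : finType) (G : game V) (sg tau : V -> seq V -> V)
  (v0 : V) (n : nat) : seq V :=
  match n with
  | 0 => [::]
  | n'.+1 =>
      let h := dhist G sg tau v0 n' in
      let c := last v0 h in
      rcons h (if isMin G c then sg v0 h else if isMax G c then tau v0 h else c)
  end.

Definition dplay (V : finType) (G : game V) (sg tau : V -> seq V -> V)
  (v0 : V) (n : nat) : V := last v0 (dhist G sg tau v0 n).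

Definition TPdet (R : realType) (V : finType) (G : game V)
  (sg tau : V -> seq V -> V) (v0 : V) : \bar R :=
  match pselect (exists n, isT G (dplay G sg tau v0 n)) with
  | left H =>
      ((\sum_(i < ex_minn H)
          weight G (dplay G sg tau v0 i) (dplay G sg tau v0 i.+1))%:~R)%:E
  | right _ => +oo%E
  end.

Definition Val_d (R : realType) (V : finType) (G : game V) (v : V) : \bar R :=
  ereal_inf [set ereal_sup [set TPdet R G sg tau v | tau in
                                  [set tau | dstrat G (isMax G) tau]]
            | sg in [set sg | dstrat G (isMin G) sg]].

Definition mstrat (R : realType) (V : finType) (G : game V) (own : pred V)
  (s : V -> V -> R) : Prop :=
  forall u, own u ->
    [/\ forall v, 0 <= s u v,
        forall v, s u v != 0 -> edge G u v
      & \sum_(v : V) s u v = 1].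

Definition trans (R : realType) (V : finType) (G : game V)
  (rho tau : V -> V -> R) (u v : V) : R :=
  if isMin G u then rho u v else if isMax G u then tau u v else 0.

Fixpoint pprob (R : realType) (V : finType) (G : game V)
  (rho tau : V -> V -> R) (x : V) (s : seq V) : R :=
  match s with
  | [::] => 1
  | y :: s' => trans G rho tau x y * pprob G rho tau y s'
  end.

Fixpoint pweight (V : finType) (G : game V) (x : V) (s : seq V) : int :=
  match s with
  | [::] => 0
  | y :: s' => (weight G x y + pweight G y s')%R
  end.

Definition fplay (V : finType) (G : game V) (v : V) (s : seq V) : bool :=
  [&& path (edge G) v s, isT G (last v s) & all (fun x => ~~ isT G x) (belast v s)].

Definition reachP (R : realType) (V : finType) (G : game V)
  (rho tau : V -> V -> R) (v : V) : \bar R :=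
  \esum_(s in [set s | fplay G v s]) (pprob G rho tau v s)%:E.

(* E^{rho,tau}_v(TP): plays not reaching T have payoff +oo, so the
   expectation is +oo when P(◊T) < 1; otherwise it is the expectation over
   the (countably many) finite plays, split in positive and negative parts. *)
Definition ETP (R : realType) (V : finType) (G : game V)
  (rho tau : V -> V -> R) (v : V) : \bar R :=
  if (reachP G rho tau v < 1)%E then +oo%E
  else (\esum_(s in [set s | fplay G v s])
           (pprob G rho tau v s * Num.max ((pweight G v s)%:~R) 0)%:E
        - \esum_(s in [set s | fplay G v s])
           (pprob G rho tau v s * Num.max (- (pweight G v s)%:~R) 0)%:E)%E.

Definition Val_m (R : realType) (V : finType) (G : game V)
  (rho : V -> V -> R) (v : V) : \bar R :=
  ereal_sup [set ETP G rho tau v | tau in [set tau | mstrat G (isMax G) tau]].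

Definition Val_m_bar (R : realType) (V : finType) (G : game V) (v : V) : \bar R :=
  ereal_inf [set Val_m G rho v | rho in [set rho | mstrat G (isMin G) rho]].

Definition Etilde (R : realType) (V : finType) (G : game V)
  (rho : V -> V -> R) (v v' : V) : Prop :=
  rho v v' != 0 /\
  forall v'', rho v v'' != 0 ->
    (((weight G v v')%:~R)%:E + Val_m G rho v' <=
     ((weight G v v'')%:~R)%:E + Val_m G rho v'')%E.

Definition Gtilde_edge (R : realType) (V : finType) (G : game V)
  (rho : V -> V -> R) (u v : V) : Prop :=
  edge G u v /\ (isMin G u -> Etilde G rho u v).

Definition attr_eqs (R : realType) (V : finType) (G : game V)
  (rho : V -> V -> R) (d : V -> nat) : Prop :=
  forall v,
    (isT G v -> d v = 0%N) /\
    (isMin G v -> (exists2 v', rho v v' != 0 & d v = (d v').+1) /\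
                  (forall v', rho v v' != 0 -> (d v <= (d v').+1)%N)) /\
    (isMax G v -> (exists2 v', edge G v v' & d v = (d v').+1) /\
                  (forall v', edge G v v' -> ((d v').+1 <= d v)%N)).

Definition attr_dist (R : realType) (V : finType) (G : game V)
  (rho : V -> V -> R) (d : V -> nat) : Prop :=
  attr_eqs G rho d /\ forall d', attr_eqs G rho d' -> forall v, (d v <= d' v)%N.

Definition sigma1_spec (R : realType) (V : finType) (G : game V)
  (rho : V -> V -> R) (d : V -> nat) (sigma1 : V -> V) : Prop :=
  forall v, isMin G v ->
    Etilde G rho v (sigma1 v) /\
    forall v', Etilde G rho v v' -> (d (sigma1 v) <= d v')%N.

(* a cycle v_0 v_1 ... v_{k-1} (closing with v_k = v_0), k >= 1, given as
   c = v0 :: s, all of whose edges are edges of \tilde G, and in which every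
   Min vertex u is followed by sigma1(u) *)
Definition conf_cycle (R : realType) (V : finType) (G : game V)
  (rho : V -> V -> R) (sigma1 : V -> V) (v0 : V) (s : seq V) : Prop :=
  forall i, (i < size (v0 :: s))%N ->
    let u := nth v0 (v0 :: s) i in
    let u' := nth v0 (v0 :: s) (i.+1 %% size (v0 :: s)) in
    Gtilde_edge G rho u u' /\ (isMin G u -> u' = sigma1 u).

Definition cycle_weight (V : finType) (G : game V) (v0 : V) (s : seq V) : int :=
  \sum_(i < size (v0 :: s))
     weight G (nth v0 (v0 :: s) i) (nth v0 (v0 :: s) (i.+1 %% size (v0 :: s))).

Definition NC_strategy (R : realType) (V : finType) (G : game V)
  (rho : V -> V -> R) (sigma1 : V -> V) : Prop :=
  forall v0 s, conf_cycle G rho sigma1 v0 s -> (cycle_weight G v0 s < 0)%R.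

(* Since rho reaches T almost surely, the
   expected hitting time of T is finite: it solves a linear system whose homogeneous
   part has only the trivial solution, by a maximum principle for the induced Markov
   chain. Hence the expected payoff E(v) is finite, and it is the unique solution of
   the Bellman equations E(v) = sum_y Q(v,y) (w(v,y) + E(y)), E = 0 on T.
   A positional tau maximising sum_v E(v) admits no improving switch, so its values
   g = Val^{m,rho} satisfy g(u) = sum_y rho(u,y) (w(u,y) + g(y)) at Min vertices and
   w(u,u') + g(u') <= g(u) along Max edges.
   Along every edge (u,u') of a cycle conforming to sigma1 the slack
   g(u) - w(u,u') - g(u') is therefore nonnegative, and when it vanishes d(u') < d(u):
   at Max vertices by the attractor equations, and at Min vertices because zero slack
   forces all of supp rho(u) into E~(u), where sigma1(u) minimises d. The slacks sum
   to minus the weight of the cycle, so a cycle of nonnegative weight would make d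
   decrease strictly all the way around it. *)

From Pilot Require Import Defs.
From HB Require Import structures.
From mathcomp Require Import all_boot all_order all_algebra.
From mathcomp Require Import boolp classical_sets reals constructive_ereal ereal esum.
From mathcomp Require Import cardinality fsbigop finmap.
From mathcomp Require Import lra.
Import Order.TTheory GRing.Theory Num.Theory.
Local Open Scope classical_set_scope.
Local Open Scope ring_scope.
Set Implicit Arguments. Unset Strict Implicit. Unset Printing Implicit Defensive.

(* Otherwise [isT] would denote ssrbool's proof of [true]. *)
Local Notation isT := Defs.isT.

(** * Sums, averages and linear systems *)

Section NonnegativeSums.
Variable R : realType.
Local Open Scope ereal_scope.

Lemma esumZl (T : choiceType) (S : set T) (a : T -> \bar R) (r : R) :
  (0 <= r)%R -> (forall i, 0 <= a i) ->
  \esum_(i in S) (r%:E * a i) = r%:E * \esum_(i in S) a i.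
Proof.
move=> r0 a0; rewrite /esum -ereal_supZl//; last first.
  by apply/set0P; exists 0; exists set0; [exact: fsets_set0|rewrite fsbig_set0].
congr ereal_sup; apply/seteqP; split=> x /=.
  move=> [A [fA AS] <-]; exists (\sum_(x \in A) a x); first by exists A.
  by rewrite !fsbig_finite// ge0_sume_distrr.
move=> [y [A [fA AS] <-] <-]; exists A => //.
by rewrite !fsbig_finite// ge0_sume_distrr.
Qed.

Lemma esum_setT_fin (V : finType) (a : V -> \bar R) :
  (forall i, 0 <= a i) -> \esum_(i in [set: V]) a i = \sum_(i : V) a i.
Proof.
move=> a0; rewrite esum_fset //; last exact: finite_finset.
rewrite (fsbigTE [fset x | x in enum V]%fset); last first.
  by move=> i; rewrite !inE /= mem_enum.
apply: perm_big; apply: uniq_perm; rewrite ?fset_uniq ?index_enum_uniq// => x.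
by rewrite mem_index_enum !inE /= mem_enum.
Qed.

Lemma esum_cons (V : finType) (S : set (seq V)) (g : seq V -> \bar R) :
  (forall s, 0 <= g s) -> ~ S [::] ->
  \esum_(s in S) g s = \sum_(v : V) \esum_(s in [set s | S (v :: s)]) g (v :: s).
Proof.
move=> g0 Snil; rewrite -esum_setT_fin; last by move=> v; apply: esum_ge0.
rewrite esum_esum// -(esum_image _ (fun k : V * seq V => k.1 :: k.2)); last first.
  by move=> [a s] [b t] _ _ /= [-> ->].
congr esum; apply/seteqP; split => [[//|v s] Ss|s]; first by exists (v, s).
by move=> [[v t] [_ /= St] <-].
Qed.

Lemma esum_le_trunc (T : choiceType) (S : set (seq T)) (g : seq T -> \bar R) c :
  (forall s, 0 <= g s) ->
  (forall n, \esum_(s in S) (if (size s <= n)%N then g s else 0) <= c) ->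
  \esum_(s in S) g s <= c.
Proof.
move=> g0 gc; apply: ge_ereal_sup => _ [X [fX XS] <-].
set n := (\max_(s <- fset_set X) size s)%N.
apply: le_trans (gc n); apply: esum_ge; exists X => //.
rewrite (eq_fsbigr (fun s => if (size s <= n)%N then g s else 0)) //.
move=> s /set_mem Xs; rewrite ifT //.
by apply: (@leq_bigmax_seq _ _ _ size) => //; rewrite in_fset_set // mem_set.
Qed.

End NonnegativeSums.

Section Averages.
Variables (R : realDomainType) (I : finType) (r : I -> R).
Hypotheses (r_ge0 : forall i, 0 <= r i) (r_sum1 : \sum_i r i = 1).

Lemma avg_le_ub f m : (forall i, r i != 0 -> f i <= m) -> \sum_i r i * f i <= m.
Proof.
move=> fm; rewrite -[m]mul1r -r_sum1 mulr_suml; apply: ler_sum => i _.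
have [->|ri] := eqVneq (r i) 0; first by rewrite !mul0r.
by rewrite ler_wpM2l ?fm.
Qed.

Lemma avg_ge_lb f m : (forall i, r i != 0 -> m <= f i) -> m <= \sum_i r i * f i.
Proof.
move=> mf; rewrite -lerN2 -sumrN; under eq_bigr do rewrite -mulrN.
by apply: avg_le_ub => i /mf; rewrite lerN2.
Qed.

Lemma avg_eq_ub f m : (forall i, r i != 0 -> f i <= m) ->
  m <= \sum_i r i * f i -> forall i, r i != 0 -> f i = m.
Proof.
move=> fm mf i ri.
have gap_ge0 j : true -> 0 <= r j * (m - f j).
  have [->|rj] := eqVneq (r j) 0; first by rewrite mul0r.
  by rewrite mulr_ge0 ?subr_ge0 ?fm.
have gaps0 : \sum_j r j * (m - f j) = 0.
  apply/eqP; rewrite eq_le sumr_ge0 // andbT.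
  under eq_bigr do rewrite mulrBr.
  by rewrite sumrB -mulr_suml r_sum1 mul1r subr_le0.
have /eqP := @psumr_eq0P _ _ _ _ gap_ge0 gaps0 i erefl.
by rewrite mulf_eq0 (negbTE ri) subr_eq0 => /eqP.
Qed.

Lemma avg_eq_lb f m : (forall i, r i != 0 -> m <= f i) ->
  \sum_i r i * f i <= m -> forall i, r i != 0 -> f i = m.
Proof.
move=> mf fm i ri; apply: oppr_inj; apply: (avg_eq_ub (f := fun j => - f j)) => //.
  by move=> j /mf; rewrite lerN2.
by under eq_bigr do rewrite mulrN; rewrite sumrN lerN2.
Qed.

End Averages.

Lemma max0_ge0 (R : realDomainType) (x : R) : 0 <= Num.max x 0.
Proof. by rewrite le_max lexx orbT. Qed.

Lemma max0_subN (R : realDomainType) (x : R) : Num.max x 0 - Num.max (- x) 0 = x.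
Proof.
have [x0|x0] := leP 0 x.
  by rewrite (max_r (_ : - x <= 0)) ?subr0 // oppr_le0.
by rewrite (max_l (_ : 0 <= - x)) ?sub0r ?opprK // oppr_ge0 ltW.
Qed.

Section AffineFixpoint.
Variables (R : fieldType) (V : finType) (M : V -> V -> R).

Let n := #|V|.
Let A : 'M[R]_n := \matrix_(i, j) ((i == j)%:R - M (enum_val j) (enum_val i)).
Let vec_fun (u : 'rV[R]_n) (x : V) := u 0 (enum_rank x).

Let mulA_entry (u : 'rV[R]_n) x :
  (u *m A) 0 (enum_rank x) = vec_fun u x - \sum_y M x y * vec_fun u y.
Proof.
rewrite mxE; under eq_bigr do rewrite mxE mulrBr.
rewrite sumrB (bigD1 (enum_rank x)) //= eqxx mulr1 big1 ?addr0; last first.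
  by move=> i /negbTE; rewrite eq_sym => ->; rewrite mulr0.
congr (_ - _); rewrite (reindex (@enum_rank V)) /=; last first.
  by exists enum_val => i _; rewrite ?enum_rankK ?enum_valK.
by apply: eq_bigr => y _; rewrite !enum_rankK mulrC.
Qed.

Lemma affine_fixpoint_exists :
  (forall h : V -> R, (forall x, h x = \sum_y M x y * h y) -> forall x, h x = 0) ->
  forall b : V -> R, exists h : V -> R, forall x, h x = b x + \sum_y M x y * h y.
Proof.
move=> fix0 b.
have A_unit : A \in unitmx.
  rewrite -row_free_unit -kermx_eq0; apply/eqP/row_matrixP => k.
  rewrite linear0; set u := row k (kermx A).
  have uA : u *m A = 0 by rewrite /u -row_mul mulmx_ker linear0.
  have u0 : forall x, vec_fun u x = 0.
    by apply: fix0 => x; apply/eqP; rewrite -subr_eq0 -mulA_entry uA mxE.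
  by apply/rowP => i; have := u0 (enum_val i); rewrite /vec_fun enum_valK !mxE.
exists (vec_fun (\row_i b (enum_val i) *m invmx A)) => x.
by have := mulA_entry (\row_i b (enum_val i) *m invmx A) x;
  rewrite mulmxKV // mxE enum_rankK => ->; rewrite subrK.
Qed.

End AffineFixpoint.

Section LinearGrowth.
Variables (R : realDomainType) (T : Type).

Definition lin_growth (h : seq T -> R) :=
  exists2 K, 0 <= K & forall s, `|h s| <= K * (size s).+1%:R.

Lemma lin_growthD h1 h2 : lin_growth h1 -> lin_growth h2 ->
  lin_growth (fun s => h1 s + h2 s).
Proof.
move=> [K1 K10 h1K] [K2 K20 h2K]; exists (K1 + K2) => [|s]; first exact: addr_ge0.
by rewrite mulrDl (le_trans (ler_normD _ _)) // lerD.
Qed.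

Lemma lin_growthN h : lin_growth h -> lin_growth (fun s => - h s).
Proof. by move=> [K K0 hK]; exists K => // s; rewrite normrN. Qed.

Lemma lin_growth_max0 h : lin_growth h -> lin_growth (fun s => Num.max (h s) 0).
Proof.
move=> [K K0 hK]; exists K => // s; apply: le_trans (hK s).
by have [_|_] := leP 0 (h s); rewrite ?normr0.
Qed.

Lemma lin_growth_cst c : lin_growth (fun=> c).
Proof. by exists `|c| => // s; rewrite ler_peMr // ler1n. Qed.

Lemma lin_growth_cons h x : lin_growth h -> lin_growth (fun s => h (x :: s)).
Proof.
move=> [K K0 hK]; exists (K + K) => [|s]; first exact: addr_ge0.
apply: le_trans (hK _) _; rewrite /= -natr1 mulrDr mulr1 mulrDl lerD2l.
by rewrite ler_peMr // ler1n.
Qed.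

End LinearGrowth.

(** * Expected payoff under memoryless strategies *)

Section Payoff.
Variables (R : realDomainType) (V : finType) (G : game V).

Definition payoff (v : V) (s : seq V) : R := (pweight G v s)%:~R.

Lemma payoff_cons v y s : payoff v (y :: s) = (weight G v y)%:~R + payoff y s.
Proof. by rewrite /payoff /= intrD. Qed.

Lemma payoff_lin_growth v : lin_growth (payoff v).
Proof.
pose W : R := \sum_x \sum_y `|(weight G x y)%:~R : R|.
have W_ge0 : 0 <= W by rewrite sumr_ge0 // => x _; rewrite sumr_ge0.
have w_le_W x y : `|(weight G x y)%:~R : R| <= W.
  rewrite /W (bigD1 x) //= (bigD1 y) //= -addrA lerDl addr_ge0 ?sumr_ge0 //.
  by move=> z _; rewrite sumr_ge0.
exists W => // s; apply: le_trans (_ : _ <= W * (size s)%:R) _; last first.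
  by rewrite ler_wpM2l // ler_nat.
elim: s v => [|y s IH] v; first by rewrite normr0 mulr0.
rewrite payoff_cons /= -natr1 mulrDr mulr1 addrC (le_trans (ler_normD _ _)) //.
exact: lerD.
Qed.

End Payoff.
Arguments payoff {R V} G v s.
Arguments payoff_cons {R V} G v y s.
Arguments payoff_lin_growth {R V} G v.

Section MarkovChain.
Variables (R : realType) (V : finType) (G : game V) (rho tau : V -> V -> R).
Hypotheses (rho_ok : mstrat G (isMin G) rho) (tau_ok : mstrat G (isMax G) tau).

Local Notation Q := (trans G rho tau).
Local Notation p := (pprob G rho tau).
Local Notation plays v := [set s | fplay G v s].

Lemma trans_Min x y : isMin G x -> Q x y = rho x y.
Proof. by rewrite /trans => ->. Qed.

Lemma trans_Max x y : isMax G x -> Q x y = tau x y.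
Proof. by move=> xM; rewrite /trans xM; case/andP: xM => _ /negbTE ->. Qed.

Lemma trans_T x y : isT G x -> Q x y = 0.
Proof. by move=> xT; rewrite /trans (negbTE (T_notMin xT)) /isMax xT. Qed.

Lemma nonT_MinVMax x : ~~ isT G x -> isMin G x || isMax G x.
Proof. by rewrite /isMax => ->; case: (isMin G x). Qed.

Lemma trans_ge0 x y : 0 <= Q x y.
Proof.
rewrite /trans; case: ifP => [xM|_]; first by case: (rho_ok xM).
by case: ifP => // xM; case: (tau_ok xM).
Qed.

Lemma trans_edge x y : Q x y != 0 -> edge G x y.
Proof.
rewrite /trans; case: ifP => [xM|_]; first by case: (rho_ok xM) => _ + _; apply.
by case: ifP => [xM|]; [case: (tau_ok xM) => _ + _; apply | rewrite eqxx].
Qed.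

Lemma trans_sum1 x : ~~ isT G x -> \sum_y Q x y = 1.
Proof.
move=> xT; case/orP: (nonT_MinVMax xT) => xM.
  by under eq_bigr do rewrite trans_Min //; case: (rho_ok xM).
by under eq_bigr do rewrite trans_Max //; case: (tau_ok xM).
Qed.

Lemma pprob_ge0 x s : 0 <= p x s.
Proof. by elim: s x => [|y s IH] x /=; rewrite ?ler01 ?mulr_ge0 ?trans_ge0. Qed.

Lemma fplay_cons x y s :
  fplay G x (y :: s) = [&& ~~ isT G x, edge G x y & fplay G y s].
Proof.
by rewrite /fplay /=; case: (isT G x); case: (edge G x y); rewrite /= ?andbF.
Qed.

Lemma plays_T v : isT G v -> plays v = [set [::]].
Proof.
move=> vT; apply/seteqP; split => [[//|y s]|s ->]; last by rewrite /= /fplay /= vT.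
by rewrite /= fplay_cons vT.
Qed.

Hypothesis reach1 : forall v, reachP G rho tau v = 1%E.

Lemma exists_play_pos v : exists2 s, fplay G v s & p v s != 0.
Proof.
apply: contrapT => nopos; have := reach1 v; rewrite /reachP esum1 => [[]|s /= vs].
  by move/eqP; rewrite eq_sym oner_eq0.
by apply/eqP; rewrite eqe; apply: contrapT => ps; apply: nopos; exists s => //; apply/negP.
Qed.

Lemma trans_max_principle (delta : V -> R) :
  (forall x, isT G x -> delta x <= 0) ->
  (forall x, ~~ isT G x -> delta x <= \sum_y Q x y * delta y) ->
  forall x, delta x <= 0.
Proof.
move=> dT dsub x; have [m _ dmax] := @arg_maxP _ _ V x xpredT delta erefl.
apply: le_trans (dmax x erefl) _.
have max_spreads z s : delta z = delta m -> fplay G z s -> p z s != 0 ->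
    delta (last z s) = delta m.
  elim: s z => [//|y s IH] z dz; rewrite fplay_cons /= mulf_eq0 negb_or.
  move=> /and3P[zT _ ys] /andP[Qzy ps]; apply: IH => //; rewrite -dz.
  apply: (avg_eq_ub (trans_ge0 z) (trans_sum1 zT)) => // [y' _|].
    by rewrite dz; exact: dmax.
  exact: dsub.
have [s ms ps] := exists_play_pos m.
by rewrite -(max_spreads m s erefl ms ps) dT //; case/and3P: ms.
Qed.

Lemma harmonic_eq0 (h : V -> R) :
  (forall x, h x = \sum_y Q x y * h y) -> forall x, h x = 0.
Proof.
have harmonic_le0 h' : (forall x, h' x = \sum_y Q x y * h' y) -> forall x, h' x <= 0.
  move=> h'E; apply: trans_max_principle => x; last by rewrite -h'E.
  by move=> xT; rewrite h'E big1 // => y _; rewrite trans_T ?mul0r.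
move=> hE x; apply/eqP; rewrite eq_le harmonic_le0 //= -oppr_le0.
apply: (harmonic_le0 (fun x => - h x)) => y; rewrite hE -sumrN.
by apply: eq_bigr => z _; rewrite mulrN.
Qed.

Lemma exists_hitting_time : exists2 phi : V -> R, (forall x, 0 <= phi x) &
  (forall x, ~~ isT G x -> phi x = 1 + \sum_y Q x y * phi y).
Proof.
have [phi phiE] := affine_fixpoint_exists harmonic_eq0 (fun x => (~~ isT G x)%:R).
exists phi => [x|x xT]; last by rewrite phiE xT.
rewrite -oppr_le0; move: x; apply: trans_max_principle => x xT.
  by rewrite phiE xT add0r big1 ?oppr0 // => y _; rewrite trans_T ?mul0r.
rewrite phiE xT opprD -sumrN; under eq_bigr do rewrite -mulrN.
by rewrite gerDr oppr_le0.
Qed.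

Definition esum_plays v (h : seq V -> R) : \bar R := \esum_(s in plays v) (p v s * h s)%:E.

Section PlaySums.
Local Open Scope ereal_scope.

Lemma esum_plays_ge0 v h : (forall s, 0 <= h s)%R -> 0 <= esum_plays v h.
Proof. by move=> h0; apply: esum_ge0 => s _; rewrite lee_fin mulr_ge0 ?pprob_ge0. Qed.

Lemma esum_plays_le v h1 h2 : (forall s, h1 s <= h2 s)%R -> esum_plays v h1 <= esum_plays v h2.
Proof. by move=> h12; apply: le_esum => s _; rewrite lee_fin ler_wpM2l ?pprob_ge0. Qed.

Lemma esum_playsD v h1 h2 : (forall s, 0 <= h1 s)%R -> (forall s, 0 <= h2 s)%R ->
  esum_plays v (fun s => h1 s + h2 s)%R = esum_plays v h1 + esum_plays v h2.
Proof.
move=> h10 h20; rewrite /esum_plays -esumD => [|s _|s _]; last 2 first.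
- by rewrite lee_fin mulr_ge0 ?pprob_ge0.
- by rewrite lee_fin mulr_ge0 ?pprob_ge0.
by apply: eq_esum => s _; rewrite mulrDr EFinD.
Qed.

Lemma esum_playsZl v c h : (0 <= c)%R -> (forall s, 0 <= h s)%R ->
  esum_plays v (fun s => c * h s)%R = c%:E * esum_plays v h.
Proof.
move=> c0 h0; rewrite /esum_plays -esumZl // => [|s]; last by rewrite lee_fin mulr_ge0 ?pprob_ge0.
by apply: eq_esum => s _; rewrite -EFinM mulrCA.
Qed.

Lemma esum_plays_cst v c : (0 <= c)%R -> esum_plays v (fun=> c) = c%:E.
Proof.
move=> c0; rewrite /esum_plays (eq_esum (b := fun s => c%:E * (p v s)%:E)).
  by rewrite esumZl // => [|s]; [rewrite -/(reachP _ _ _ _) reach1 mule1 | rewrite lee_fin pprob_ge0].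
by move=> s _; rewrite -EFinM mulrC.
Qed.

Lemma esum_plays_T v h : isT G v -> (0 <= h [::])%R -> esum_plays v h = (h [::])%:E.
Proof. by move=> vT h0; rewrite /esum_plays plays_T // esum_set1 ?mul1r // lee_fin mul1r. Qed.

Lemma esum_plays_first_step v h : ~~ isT G v -> (forall s, 0 <= h s)%R ->
  esum_plays v h = \sum_y (Q v y)%:E * esum_plays y (fun s => h (y :: s)).
Proof.
move=> vT h0; rewrite /esum_plays esum_cons => [|s|]; last 2 first.
- by rewrite lee_fin mulr_ge0 ?pprob_ge0.
- by rewrite /= /fplay /= (negbTE vT).
apply: eq_bigr => y _; have [vy|nvy] := boolP (edge G v y).
  rewrite -esumZl; last 2 first.
  - exact: trans_ge0.
  - by move=> s; rewrite lee_fin mulr_ge0 ?pprob_ge0.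
  have -> : [set s | fplay G v (y :: s)] = plays y.
    by apply/seteqP; split => s /=; rewrite fplay_cons vT vy.
  by apply: eq_esum => s _ /=; rewrite -EFinM mulrA.
have -> : Q v y = 0%R by apply/eqP; apply: contraNT nvy => /trans_edge.
by rewrite mul0e esum1 // => s /=; rewrite fplay_cons (negbTE nvy) andbF.
Qed.

Lemma esum_plays_trunc v h c : (forall s, 0 <= h s)%R ->
  (forall n, esum_plays v (fun s => if (size s <= n)%N then h s else 0%R) <= c) ->
  esum_plays v h <= c.
Proof.
move=> h0 hc; apply: esum_le_trunc => [s|n]; first by rewrite lee_fin mulr_ge0 ?pprob_ge0.
by apply: le_trans (hc n); apply: le_esum => s _; case: ifP; rewrite ?mulr0.
Qed.

Lemma esum_plays_size_le (phi : V -> R) :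
  (forall x, ~~ isT G x -> phi x = 1 + \sum_y Q x y * phi y)%R ->
  (forall x, 0 <= phi x)%R ->
  forall v, esum_plays v (fun s => (size s)%:R) <= (phi v)%:E.
Proof.
move=> phiE phi0 v; apply: esum_plays_trunc => // n; elim: n v => [|n IH] v.
  by rewrite /esum_plays esum1 ?lee_fin // => -[|? ?] _; rewrite /= mulr0.
have [vT|vT] := boolP (isT G v); first by rewrite esum_plays_T // lee_fin.
rewrite esum_plays_first_step // => [|s]; last by case: ifP.
have -> : phi v = (\sum_y Q v y * (1 + phi y))%R.
  by under eq_bigr do rewrite mulrDr mulr1; rewrite big_split /= trans_sum1 ?phiE.
rewrite -sumEFin lee_sum // => y _; rewrite EFinM lee_wpmul2l ?lee_fin ?trans_ge0 // EFinD.
rewrite -(esum_plays_cst y ler01); apply: le_trans (leeD (le_refl _) (IH y)).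
rewrite -esum_playsD => [|//|s]; last by case: ifP.
by apply: esum_plays_le => s /=; rewrite ltnS; case: ifP => _; rewrite ?addr0 // addrC natr1.
Qed.

End PlaySums.

Lemma esum_plays_fin v h : (forall s, 0 <= h s) -> lin_growth h -> esum_plays v h \is a fin_num.
Proof.
move=> h0 [K K0 hK]; have [phi phi0 phiE] := exists_hitting_time.
rewrite ge0_fin_numE ?esum_plays_ge0 //.
apply: (@le_lt_trans _ _ (K * (phi v + 1))%:E); last exact: ltry.
apply: (@le_trans _ _ (esum_plays v (fun s => K * ((size s)%:R + 1)))).
  by apply: esum_plays_le => s; rewrite natr1 -(ger0_norm (h0 s)).
rewrite esum_playsZl ?esum_playsD ?addr_ge0 // EFinM EFinD lee_wpmul2l ?lee_fin //.
by rewrite leeD ?esum_plays_size_le ?esum_plays_cst.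
Qed.

(* Both sums are finite, and [expect v h] is the expectation of [h], only when [h]
   has linear growth; otherwise [fine] silently maps +oo to 0. *)
Definition expect v (h : seq V -> R) : R :=
  fine (esum_plays v (fun s => Num.max (h s) 0)) - fine (esum_plays v (fun s => Num.max (- h s) 0)).

Lemma expect_split v h (a b : seq V -> R) : (forall s, 0 <= a s) -> (forall s, 0 <= b s) ->
  lin_growth a -> lin_growth b -> (forall s, h s = a s - b s) ->
  expect v h = fine (esum_plays v a) - fine (esum_plays v b).
Proof.
move=> a0 b0 la lb hE.
have lh : lin_growth h.
  by rewrite (_ : h = fun s => a s - b s); [exact/lin_growthD/lin_growthN | exact/funext].
have parts : esum_plays v (fun s => Num.max (h s) 0 + b s) =
             esum_plays v (fun s => Num.max (- h s) 0 + a s).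
  by congr esum_plays; apply/funext => s; move: (max0_subN (h s)); rewrite hE; lra.
have hp0 s : 0 <= Num.max (h s) 0 by exact: max0_ge0.
have hn0 s : 0 <= Num.max (- h s) 0 by exact: max0_ge0.
have lhp := lin_growth_max0 lh; have lhn := lin_growth_max0 (lin_growthN lh).
move/(congr1 fine): parts; rewrite !esum_playsD // !fineD ?esum_plays_fin //.
by rewrite /expect; lra.
Qed.

Lemma expect_add v h1 h2 : lin_growth h1 -> lin_growth h2 ->
  expect v (fun s => h1 s + h2 s) = expect v h1 + expect v h2.
Proof.
move=> l1 l2; have lp1 := lin_growth_max0 l1; have lp2 := lin_growth_max0 l2.
have ln1 := lin_growth_max0 (lin_growthN l1); have ln2 := lin_growth_max0 (lin_growthN l2).
rewrite (@expect_split _ _ (fun s => Num.max (h1 s) 0 + Num.max (h2 s) 0)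
                           (fun s => Num.max (- h1 s) 0 + Num.max (- h2 s) 0)).
- rewrite !esum_playsD; try by move=> s; exact: max0_ge0.
  by rewrite !fineD ?esum_plays_fin //; try (move=> s; exact: max0_ge0); rewrite /expect; lra.
- by move=> s; rewrite addr_ge0 ?max0_ge0.
- by move=> s; rewrite addr_ge0 ?max0_ge0.
- exact: lin_growthD.
- exact: lin_growthD.
- by move=> s; move: (max0_subN (h1 s)) (max0_subN (h2 s)); lra.
Qed.

Lemma expect_cst v c : expect v (fun=> c) = c.
Proof. by rewrite /expect !esum_plays_cst ?max0_ge0 //= max0_subN. Qed.

Lemma expect_T v h : isT G v -> expect v h = h [::].
Proof. by move=> vT; rewrite /expect !esum_plays_T ?max0_ge0 //= max0_subN. Qed.

Lemma expect_first_step v h : ~~ isT G v -> lin_growth h ->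
  expect v h = \sum_y Q v y * expect y (fun s => h (y :: s)).
Proof.
move=> vT lh.
have fine_step k : (forall s, 0 <= k s) -> lin_growth k ->
    fine (esum_plays v k) = \sum_y Q v y * fine (esum_plays y (fun s => k (y :: s))).
  move=> k0 lk; rewrite esum_plays_first_step //.
  rewrite (eq_bigr (fun y => (Q v y * fine (esum_plays y (fun s => k (y :: s))))%:E)) ?sumEFin //.
  move=> y _; rewrite EFinM fineK //.
  by apply: esum_plays_fin => [s|]; [exact: k0 | exact: lin_growth_cons].
have lhp := lin_growth_max0 lh; have lhn := lin_growth_max0 (lin_growthN lh).
rewrite /expect !fine_step //; try by move=> s; exact: max0_ge0.
by under [RHS]eq_bigr do rewrite mulrBr; rewrite sumrB.
Qed.

Definition expected_payoff v := expect v (payoff G v).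

Lemma ETP_expected_payoff v : ETP G rho tau v = (expected_payoff v)%:E.
Proof.
have lp : lin_growth (payoff G v) := payoff_lin_growth G v.
rewrite /ETP reach1 ltxx /expected_payoff /expect EFinB !fineK //.
  by apply: esum_plays_fin => [s|]; [exact: max0_ge0 | exact/lin_growth_max0/lin_growthN].
by apply: esum_plays_fin => [s|]; [exact: max0_ge0 | exact/lin_growth_max0].
Qed.

Lemma expected_payoff_T v : isT G v -> expected_payoff v = 0.
Proof. by move=> vT; rewrite /expected_payoff expect_T. Qed.

Lemma expected_payoff_step v : ~~ isT G v ->
  expected_payoff v = \sum_y Q v y * ((weight G v y)%:~R + expected_payoff y).
Proof.
move=> vT; rewrite /expected_payoff expect_first_step //; last exact: payoff_lin_growth.
apply: eq_bigr => y _; under eq_fun do rewrite payoff_cons.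
rewrite expect_add; [|exact: lin_growth_cst|exact: payoff_lin_growth].
by congr (_ * (_ + _)); exact: expect_cst.
Qed.

Lemma sub_bellman_le (h : V -> R) : (forall x, isT G x -> h x = 0) ->
  (forall x, ~~ isT G x -> h x <= \sum_y Q x y * ((weight G x y)%:~R + h y)) ->
  forall x, h x <= expected_payoff x.
Proof.
move=> hT hsub x; rewrite -subr_le0; move: x; apply: trans_max_principle => x xT.
  by rewrite hT // expected_payoff_T // subr0.
rewrite expected_payoff_step //; apply: le_trans (lerB (hsub x xT) (lexx _)) _.
by rewrite -sumrB; under eq_bigr do rewrite -mulrBr opprD addrACA subrr add0r.
Qed.

Lemma super_bellman_ge (h : V -> R) : (forall x, isT G x -> h x = 0) ->
  (forall x, ~~ isT G x -> \sum_y Q x y * ((weight G x y)%:~R + h y) <= h x) ->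
  forall x, expected_payoff x <= h x.
Proof.
move=> hT hsup x; rewrite -subr_le0; move: x; apply: trans_max_principle => x xT.
  by rewrite hT // expected_payoff_T // subr0.
rewrite expected_payoff_step //; apply: le_trans (lerB (lexx _) (hsup x xT)) _.
by rewrite -sumrB; under eq_bigr do rewrite -mulrBr opprD addrACA subrr add0r.
Qed.

End MarkovChain.

(** * An optimal positional counter-strategy *)

Section OptimalCounterStrategy.
Variables (R : realType) (V : finType) (G : game V) (rho : V -> V -> R).
Hypotheses (rho_ok : mstrat G (isMin G) rho)
  (reach1 : forall tau, mstrat G (isMax G) tau -> forall v, reachP G rho tau v = 1%E).

Local Notation w u v := ((weight G u v)%:~R : R).
Local Notation value tau := (expected_payoff G rho tau).

Definition positional (f : {ffun V -> V}) (u v : V) : R := (f u == v)%:R.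

Definition max_choice (f : {ffun V -> V}) := [forall u, isMax G u ==> edge G u (f u)].

Lemma sum_positional f u (F : V -> R) : \sum_y positional f u y * F y = F (f u).
Proof.
rewrite (bigD1 (f u)) //= /positional eqxx mul1r big1 ?addr0 // => y /negbTE.
by rewrite eq_sym => ->; rewrite mul0r.
Qed.

Lemma positional_mstrat f : max_choice f -> mstrat G (isMax G) (positional f).
Proof.
move=> /forallP fE u uM; split => [v|v|]; first by rewrite ler0n.
  by rewrite /positional pnatr_eq0 eqb0 negbK => /eqP <-; have /implyP := fE u; apply.
by have := sum_positional f u (fun=> 1); under eq_bigr do rewrite mulr1.
Qed.

Lemma exists_max_choice : exists f, max_choice f.
Proof.
exists [ffun u => odflt u [pick v | edge G u v]]; apply/forallP => u.
apply/implyP => /andP[uT _]; rewrite ffunE.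
by case: pickP => [//|noedge]; have [v uv] := succ_ex uT; rewrite noedge in uv.
Qed.

Lemma value_Min tau : mstrat G (isMax G) tau -> forall u, isMin G u ->
  value tau u = \sum_y rho u y * (w u y + value tau y).
Proof.
move=> tau_ok u uM; rewrite (expected_payoff_step rho_ok tau_ok (reach1 tau_ok)).
  by apply: eq_bigr => y _; rewrite trans_Min.
by apply: contraL uM => /T_notMin.
Qed.

Lemma value_positional_Max f : max_choice f -> forall u, isMax G u ->
  value (positional f) u = w u (f u) + value (positional f) (f u).
Proof.
move=> f_ok u uM; have pf_ok := positional_mstrat f_ok.
rewrite (expected_payoff_step rho_ok pf_ok (reach1 pf_ok)); last by case/andP: uM.
by under eq_bigr do rewrite trans_Max //; rewrite sum_positional.
Qed.

Section SwitchingArgument.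
Variable fs : {ffun V -> V}.
Hypotheses (fs_ok : max_choice fs)
  (fs_max : forall f, max_choice f ->
     \sum_v value (positional f) v <= \sum_v value (positional fs) v).

Local Notation g := (value (positional fs)).

Lemma optimal_Max_edge u u' : isMax G u -> edge G u u' -> w u u' + g u' <= g u.
Proof.
move=> uM uu'; rewrite leNgt; apply/negP => improving.
pose f := [ffun x => if x == u then u' else fs x].
have f_ok : max_choice f.
  apply/forallP => x; rewrite ffunE; case: eqP => [->|_]; first by rewrite uM.
  exact: (forallP fs_ok x).
have pf_ok := positional_mstrat f_ok.
have g_le x : g x <= value (positional f) x.
  apply: (sub_bellman_le rho_ok pf_ok (reach1 pf_ok)) => {x} [x xT|x xT].
    exact: expected_payoff_T.
  case/orP: (nonT_MinVMax xT) => xM.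
    rewrite (value_Min (positional_mstrat fs_ok)) //.
    by under [X in _ <= X]eq_bigr do rewrite trans_Min //.
  under [X in _ <= X]eq_bigr do rewrite trans_Max //.
  rewrite (sum_positional f x (fun y => w x y + g y)) ffunE.
  by case: eqP => [->|_]; [exact: ltW | rewrite value_positional_Max].
have g_lt : g u < value (positional f) u.
  by rewrite (value_positional_Max f_ok) // ffunE eqxx (lt_le_trans improving) ?lerD2l.
have := fs_max f_ok; rewrite leNgt => /negP; apply.
rewrite -subr_gt0 -sumrB (bigD1 u) //= ltr_pwDl ?subr_gt0 //.
by rewrite sumr_ge0 // => x _; rewrite subr_ge0.
Qed.

Lemma value_le_optimal tau : mstrat G (isMax G) tau -> forall x, value tau x <= g x.
Proof.
move=> tau_ok; apply: (super_bellman_ge rho_ok tau_ok (reach1 tau_ok)) => x xT.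
  exact: expected_payoff_T.
case/orP: (nonT_MinVMax xT) => xM.
  rewrite (value_Min (positional_mstrat fs_ok)) //.
  by under eq_bigr do rewrite trans_Min //.
under eq_bigr do rewrite trans_Max //.
have [tau0 tau_edge tau1] := tau_ok x xM.
by apply: avg_le_ub => // y /tau_edge; exact: optimal_Max_edge.
Qed.

End SwitchingArgument.

Lemma exists_optimal_potential : exists g : V -> R,
  [/\ forall v, Val_m G rho v = (g v)%:E,
      forall u u', isMax G u -> edge G u u' -> w u u' + g u' <= g u
    & forall u, isMin G u -> g u = \sum_y rho u y * (w u y + g y)].
Proof.
have [f0 f0_ok] := exists_max_choice.
have [fs fs_ok fs_max] := @arg_maxP _ _ _ f0 max_choice
  (fun f => \sum_v value (positional f) v) f0_ok.
have pfs_ok := positional_mstrat fs_ok.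
exists (value (positional fs)); split.
- move=> v; apply/eqP; rewrite eq_le; apply/andP; split.
    apply: ge_ereal_sup => _ [tau tau_ok <-].
    by rewrite ETP_expected_payoff ?lee_fin ?value_le_optimal //; exact: reach1.
  apply: ereal_sup_ubound; exists (positional fs) => //.
  by rewrite ETP_expected_payoff //; exact: reach1.
- exact: optimal_Max_edge.
- exact: value_Min.
Qed.

End OptimalCounterStrategy.

(** * Conforming cycles are negative *)

Lemma cycle_weight_lt0 (R : realDomainType) (V : finType) (G : game V)
    (g : V -> R) (d : V -> nat) (e : V -> V -> Prop) v0 s :
  (forall u u', e u u' -> (weight G u u')%:~R + g u' <= g u) ->
  (forall u u', e u u' -> (weight G u u')%:~R + g u' = g u -> (d u' < d u)%N) ->
  (forall i, (i < size (v0 :: s))%N ->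
     e (nth v0 (v0 :: s) i) (nth v0 (v0 :: s) (i.+1 %% size (v0 :: s)))) ->
  cycle_weight G v0 s < 0.
Proof.
move=> e_le e_lt cyc; set n := size (v0 :: s).
pose u (i : 'I_n) := nth v0 (v0 :: s) i.
pose wgt (i : 'I_n) : R := (weight G (u i) (u (ordS i)))%:~R.
pose slack i := g (u i) - wgt i - g (u (ordS i)).
have e_step (i : 'I_n) : e (u i) (u (ordS i)) by exact: cyc.
have rot T (idx : T) (op : Monoid.com_law idx) (F : 'I_n -> T) :
    \big[op/idx]_i F (ordS i) = \big[op/idx]_i F i.
  by rewrite [RHS](reindex_inj (@ordS_inj n)).
have slack_ge0 i : true -> 0 <= slack i.
  by rewrite /slack subr_ge0 lerBrDr addrC e_le.
rewrite ltNge; apply/negP => cw_ge0.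
have slack0 : \sum_i slack i = 0.
  apply/eqP; rewrite eq_le sumr_ge0 // andbT /slack !sumrB.
  rewrite (rot _ _ _ (fun i => g (u i))) addrAC subrr sub0r oppr_le0.
  by rewrite /wgt -rmorph_sum ler0z.
have d_lt i : (d (u (ordS i)) < d (u i))%N.
  apply: e_lt => //; move: (@psumr_eq0P _ _ _ _ slack_ge0 slack0 i erefl).
  by rewrite /slack /wgt; lra.
have : (\sum_i (d (u (ordS i))).+1 <= \sum_i d (u i))%N.
  by apply: leq_sum => i _; exact: d_lt.
under eq_bigr do rewrite -addn1.
rewrite (rot _ _ _ (fun i => d (u i) + 1)%N) big_split /= sum1_card card_ord.
by rewrite -[X in (_ <= X)%N]addn0 leq_add2l.
Qed.

Section ConformingEdges.
Variables (R : realType) (V : finType) (G : game V) (rho : V -> V -> R).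
Variables (d : V -> nat) (sigma1 : V -> V) (g : V -> R).

Local Notation w u v := ((weight G u v)%:~R : R).

Hypotheses (rho_ok : mstrat G (isMin G) rho) (Val_g : forall v, Val_m G rho v = (g v)%:E)
  (g_Max : forall u u', isMax G u -> edge G u u' -> w u u' + g u' <= g u)
  (g_Min : forall u, isMin G u -> g u = \sum_y rho u y * (w u y + g y)).

Lemma EtildeE u u' : Etilde G rho u u' <->
  rho u u' != 0 /\ forall y, rho u y != 0 -> w u u' + g u' <= w u y + g y.
Proof.
by split => -[u'_supp u'_min]; split => // y /u'_min; rewrite !Val_g -!EFinD lee_fin.
Qed.

Lemma Gtilde_edge_le u u' : Gtilde_edge G rho u u' -> w u u' + g u' <= g u.
Proof.
move=> [uu' Etilde_u']; case/orP: (nonT_MinVMax (edge_src uu')) => uM; last exact: g_Max.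
have [_ u'_min] := (EtildeE u u').1 (Etilde_u' uM).
have [rho0 _ rho1] := rho_ok uM.
by rewrite (g_Min uM); exact: (avg_ge_lb rho0 rho1 u'_min).
Qed.

Hypotheses (d_eqs : attr_eqs G rho d) (sigma1_ok : sigma1_spec G rho d sigma1).

Lemma Gtilde_edge_tight u u' : Gtilde_edge G rho u u' -> (isMin G u -> u' = sigma1 u) ->
  w u u' + g u' = g u -> (d u' < d u)%N.
Proof.
move=> [uu' Etilde_u'] u'_sigma1 tight; have [_ [d_Min d_Max]] := d_eqs u.
case/orP: (nonT_MinVMax (edge_src uu')) => uM; last by case: (d_Max uM) => _; apply.
have [u'_supp u'_min] := (EtildeE u u').1 (Etilde_u' uM).
have [rho0 _ rho1] := rho_ok uM.
have supp_min y : rho u y != 0 -> w u y + g y = w u u' + g u'.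
  by apply: (avg_eq_lb rho0 rho1 u'_min); rewrite -(g_Min uM) tight.
have [[v' v'_supp ->] _] := d_Min uM.
rewrite (u'_sigma1 uM) ltnS; apply: (sigma1_ok uM).2; apply/EtildeE.
by split => // y y_supp; rewrite supp_min //; exact: u'_min.
Qed.

End ConformingEdges.

Unset Implicit Arguments.

Theorem lemma22 (R : realType) (V : finType) (G : game V)
  (rho : V -> V -> R) (d : V -> nat) (sigma1 : V -> V) :
  (forall v, Val_d R G v != +oo%E) ->
  (forall v, Val_m_bar R G v != +oo%E) ->
  mstrat G (isMin G) rho ->
  (forall v tau, mstrat G (isMax G) tau -> reachP G rho tau v = 1%E) ->
  attr_dist G rho d ->
  sigma1_spec G rho d sigma1 ->
  NC_strategy G rho sigma1.
Proof.
move=> _ _ rho_ok reach [d_eqs _] sigma1_ok v0 s conf.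
have [g [Val_g g_Max g_Min]] :=
  exists_optimal_potential rho_ok (fun tau tau_ok v => reach v tau tau_ok).
apply: (@cycle_weight_lt0 _ _ _ g d
  (fun u u' => Gtilde_edge G rho u u' /\ (isMin G u -> u' = sigma1 u))).
- by move=> u u' [] /(Gtilde_edge_le rho_ok Val_g g_Max g_Min).
- by move=> u u' [] /(Gtilde_edge_tight rho_ok Val_g g_Min d_eqs sigma1_ok).
- exact: conf.
Qed.
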